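(* Let $G$ be a finite group and let $\Gamma \le G$ be a subgroup. Then $\|\Gamma\|_W \le 1$, where $\Gamma$ is identified with its indicator function $\Gamma: G\to\{0,1\}$.
   Context: Let $\widehat{G}$ be a complete set of pairwise non-isomorphic irreducible unitary representations of $G$, and for $\rho\in\widehat G$ let $d_\rho$ be its dimension. For $f:G\to\mathbb{C}$ the Fourier transform at $\rho$ is the matrix $\widehat f(\rho)=\sum_{g\in G} f(g)\rho(g)$. For a matrix $M$, $\|M\| = \sqrt{\mathrm{tr}(MM^* )}$ is the Hilbert–Schmidt norm. The Wiener norm of $f$ is $\|f\|_W = \frac{1}{|G|}\sum_{\rho\in\widehat G} d_\rho \|\widehat f(\rho)\|$. *)

From mathcomp Require Import all_boot all_order all_algebra all_fingroup all_solvable all_field all_character.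
Set Implicit Arguments. Unset Strict Implicit. Unset Printing Implicit Defensive.
Import GRing.Theory Num.Theory.
Local Open Scope ring_scope.

Definition adjmx m n (A : 'M[algC]_(m, n)) : 'M[algC]_(n, m) := (map_mx (@Num.conj algC) A)^T.

Definition hs_norm n (M : 'M[algC]_n) : algC := sqrtC (\tr (M *m adjmx M)).

Definition unitary_repr (gT : finGroupType) (G : {group gT}) n
  (rG : mx_representation algC G n) : Prop :=
  forall g, g \in G -> rG g *m adjmx (rG g) = 1%:M.

Definition fourier (gT : finGroupType) (G : {group gT}) n
  (rG : mx_representation algC G n) (f : gT -> algC) : 'M[algC]_n :=
  \sum_(g in G) f g *: rG g.

Definition wiener_norm (gT : finGroupType) (G : {group gT}) (I : finType)
  (d : I -> nat) (rho : forall i, mx_representation algC G (d i)) (f : gT -> algC) : algC :=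
  (#|G|%:R)^-1 * \sum_(i : I) (d i)%:R * hs_norm (fourier (rho i) f).

Definition indicator (gT : finGroupType) (H : {set gT}) : gT -> algC :=
  fun g => (g \in H)%:R.

(* The Fourier transform of the indicator of Gamma at a unitary rho is
   P = sum_(g in Gamma) rho(g), which is self-adjoint and satisfies
   P^2 = |Gamma| P.  Hence ||P||^2 = |Gamma| tr P = |Gamma|^2 m, where
   m = <Res chi_rho, 1>_Gamma is a natural number, so
   ||P|| = |Gamma| sqrt m <= |Gamma| m = sum_(g in Gamma) chi_rho(g).
   Weighting by d_rho and summing over rho turns the right-hand side into the
   sum over Gamma of the regular character, which is |G|. *)

From mathcomp Require Import all_boot all_order all_algebra all_fingroup all_solvable all_field all_character.
Import GRing.Theory Num.Theory.
Local Open Scope ring_scope.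
Set Implicit Arguments. Unset Strict Implicit. Unset Printing Implicit Defensive.

Lemma adjmx_sum m n (I : Type) (r : seq I) (P : pred I) (A : I -> 'M[algC]_(m, n)) :
  adjmx (\sum_(i <- r | P i) A i) = \sum_(i <- r | P i) adjmx (A i).
Proof. by rewrite /adjmx map_mx_sum raddf_sum. Qed.

Lemma sqrtC_le_nat (m : algC) : m \in Num.nat -> sqrtC m <= m.
Proof.
move=> /natrP[[|k] ->]; first by rewrite sqrtC0.
rewrite -{2}[k.+1%:R]sqrCK ?ler0n // ler_sqrtC ?qualifE /= ?ler0n ?exprn_ge0 //.
by rewrite -natrX ler_nat expnS leq_pmulr // expn_gt0.
Qed.

Lemma cfdot_Res1_sum (gT : finGroupType) (G H : {group gT}) (phi : 'CF(G)) :
  H \subset G -> #|H|%:R * '['Res[H] phi, 1]_H = \sum_(g in H) phi g.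
Proof.
move=> sHG; rewrite cfdotE mulrA divff ?mul1r ?pnatr_eq0 -?lt0n ?cardG_gt0 //.
by apply: eq_bigr => g Hg; rewrite cfResE // cfun1E Hg conjC1 mulr1.
Qed.

Lemma sum_cfReg (gT : finGroupType) (G : {group gT}) (A : {pred gT}) :
  1%g \in A -> \sum_(g in A) cfReg G g = #|G|%:R.
Proof.
move=> A1; rewrite (bigD1 1%g) //= cfRegE eqxx mulr1n big1 ?addr0 // => g /andP[_ ng1].
by rewrite cfRegE (negbTE ng1).
Qed.

Section UnitaryRepr.
Variables (gT : finGroupType) (G : {group gT}) (n : nat) (rG : mx_representation algC G n).
Hypothesis unitary_rG : unitary_repr rG.

Lemma adjmx_repr g : g \in G -> adjmx (rG g) = rG g^-1%g.
Proof.
move=> Gg; rewrite repr_mxV // -[adjmx _]mul1mx -(mulVmx (repr_mx_unit rG Gg)).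
by rewrite -mulmxA unitary_rG // mulmx1.
Qed.

End UnitaryRepr.

Section SubgroupFourier.
Variables (gT : finGroupType) (G H : {group gT}) (n : nat) (rG : mx_representation algC G n).
Hypothesis sHG : H \subset G.

Local Notation P := (\sum_(g in H) rG g).

Lemma fourier_indicator : fourier rG (indicator H) = P.
Proof.
rewrite /fourier (eq_bigr (fun g => if g \in H then rG g else 0)); last first.
  by move=> g _; rewrite /indicator; case: (g \in H); rewrite ?scale1r ?scale0r.
rewrite -big_mkcondr; apply: eq_bigl => g.
by case Hg: (g \in H); rewrite ?andbT ?andbF // (subsetP sHG).
Qed.

Lemma mul_repr_sum_subgroup x : x \in H -> rG x *m P = P.
Proof.
move=> Hx; rewrite mulmx_sumr (eq_bigr (fun g => rG (x * g)%g)); last first.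
  by move=> g Hg; rewrite repr_mxM // (subsetP sHG).
by rewrite [RHS](reindex_inj (mulgI x)) /=; apply: eq_bigl => g; rewrite groupMl.
Qed.

Lemma sum_subgroup_sqr : P *m P = #|H|%:R *: P.
Proof.
rewrite {1}mulmx_suml (eq_bigr (fun _ => P)) => [|g Hg]; last exact: mul_repr_sum_subgroup.
by rewrite sumr_const scaler_nat.
Qed.

Lemma mxtrace_sum_subgroup : \tr P = \sum_(g in H) cfRepr rG g.
Proof. by rewrite raddf_sum; apply: eq_bigr => g Hg; rewrite cfunE (subsetP sHG). Qed.

Lemma cfdot_Res_repr1_nat : '['Res[H] (cfRepr rG), 1]_H \in Num.nat.
Proof. by rewrite Cnat_cfdot_char ?cfun1_char ?cfRes_char ?cfRepr_char. Qed.

Hypothesis unitary_rG : unitary_repr rG.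

Lemma adjmx_sum_subgroup : adjmx P = P.
Proof.
rewrite adjmx_sum (eq_bigr (fun g => rG g^-1%g)) => [|g Hg]; last first.
  by rewrite adjmx_repr // (subsetP sHG).
rewrite (reindex_inj invg_inj) /=; apply: eq_big => g; first by rewrite groupV.
by rewrite invgK.
Qed.

Lemma hs_norm_fourier_indicator :
  hs_norm (fourier rG (indicator H)) =
  #|H|%:R * sqrtC '['Res[H] (cfRepr rG), 1]_H.
Proof.
rewrite /hs_norm fourier_indicator adjmx_sum_subgroup sum_subgroup_sqr mxtraceZ.
rewrite mxtrace_sum_subgroup -cfdot_Res1_sum // mulrA -expr2.
by rewrite sqrtCM ?sqrCK ?ler0n // qualifE /= ?exprn_ge0 ?ler0n // natr_ge0 ?cfdot_Res_repr1_nat.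
Qed.

Lemma hs_norm_fourier_indicator_le :
  hs_norm (fourier rG (indicator H)) <= \sum_(g in H) cfRepr rG g.
Proof.
rewrite hs_norm_fourier_indicator -cfdot_Res1_sum // ler_wpM2l ?ler0n //.
exact/sqrtC_le_nat/cfdot_Res_repr1_nat.
Qed.

End SubgroupFourier.

Section CompleteIrrFamily.
Variables (gT : finGroupType) (G : {group gT}) (I : finType) (d : I -> nat)
  (rho : forall i, mx_representation algC G (d i)).
Hypothesis irr_rho : forall i, mx_irreducible (rho i).
Hypothesis rsim_inj : forall i j, mx_rsim (rho i) (rho j) -> i = j.
Hypothesis rsim_surj : forall n (rG : mx_representation algC G n),
  mx_irreducible rG -> exists i, mx_rsim rG (rho i).

Let iirr i := cfIirr (cfRepr (rho i)).

Let iirrE i : 'chi_(iirr i) = cfRepr (rho i).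
Proof. by apply/cfIirrE/irr_reprP; exists (Representation (rho i)); first exact: irr_rho. Qed.

Let iirr_bij : bijective iirr.
Proof.
have iirr_inj : injective iirr.
  by move=> i j eq_ij; apply/rsim_inj/cfRepr_rsimP; rewrite -!iirrE eq_ij.
apply: (inj_card_bij iirr_inj); rewrite -(card_codom iirr_inj).
apply/subset_leq_card/subsetP => k _.
have /irr_reprP[rG irr_rG chi_k] := mem_irr k.
have [i sim_i] := rsim_surj irr_rG.
suff <- : iirr i = k by apply: codom_f.
by apply: irr_inj; rewrite iirrE -(cfRepr_sim sim_i) -chi_k.
Qed.

Lemma sum_irr_family_cfReg : \sum_i (d i)%:R *: cfRepr (rho i) = cfReg G.
Proof.
rewrite cfReg_sum (reindex iirr) /=; last exact: onW_bij.
by apply: eq_bigr => i _; rewrite iirrE cfRepr1.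
Qed.

End CompleteIrrFamily.

Theorem lemma6 (gT : finGroupType) (G Gamma : {group gT}) (I : finType)
  (d : I -> nat) (rho : forall i, mx_representation algC G (d i)) :
  Gamma \subset G ->
  (forall i, unitary_repr (rho i)) ->
  (forall i, mx_irreducible (rho i)) ->
  (forall i j, mx_rsim (rho i) (rho j) -> i = j) ->
  (forall n (rG : mx_representation algC G n),
      mx_irreducible rG -> exists i, mx_rsim rG (rho i)) ->
  wiener_norm rho (indicator Gamma) <= 1.
Proof.
move=> sGammaG unitary_rho irr_rho rsim_inj rsim_surj.
have G_gt0 : 0 < #|G|%:R :> algC by rewrite ltr0n cardG_gt0.
have -> : 1 = #|G|%:R^-1 * \sum_(g in Gamma) cfReg G g.
  by rewrite sum_cfReg // mulVf ?lt0r_neq0.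
rewrite /wiener_norm ler_pM2l ?invr_gt0 //.
rewrite -(sum_irr_family_cfReg irr_rho rsim_inj rsim_surj).
under [X in _ <= X]eq_bigr do rewrite sum_cfunE.
rewrite exchange_big /=; apply: ler_sum => i _.
under [X in _ <= X]eq_bigr do rewrite cfunE.
rewrite -big_distrr /= ler_wpM2l ?ler0n //.
exact: hs_norm_fourier_indicator_le.
Qed.
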